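(* Let $\mathcal H$ be a family of graphs. The following are equivalent: (i) there is a constant $c=c(\mathcal H)$ such that every (not necessarily connected) $\mathcal H$-free graph $G$ has fewer than $c$ vertices $v$ for which $G[N(v)]$ has at least $2$ connected components; (ii) there is a positive integer $n$ such that $\mathcal H\le \{K_n^*,\ nP_3,\ K_{1,n}^*,\ K_{2,n},\ CK_n,\ T_n\}$.
   Context: All graphs are finite, simple, undirected. For graphs $H_1,H_2$, write $H_1\prec H_2$ if $H_2$ contains an induced subgraph isomorphic to $H_1$. A graph $G$ is $\mathcal H$-free if no $H\in\mathcal H$ satisfies $H\prec G$. For families $\mathcal H_1,\mathcal H_2$, write $\mathcal H_1\le\mathcal H_2$ if for every $H_2\in\mathcal H_2$ there is $H_1\in\mathcal H_1$ with $H_1\prec H_2$. $N(v)$ is the neighborhood and $G[S]$ the induced subgraph. $K_n$, $E_n$, $P_n$ are the complete graph, edgeless graph, and path on $n$ vertices; $K_{s,t}$ is the complete bipartite graph; $nG$ is the disjoint union of $n$ copies of $G$; $G_1+G_2$ is the join. $K_{1,n}^*$ is obtained from the star $K_{1,n}$ by attaching a new pendant vertex to each leaf; $K_n^*$ is obtained from $K_n$ by attaching a new pendant vertex to each vertex; $CK_n$ is obtained from two disjoint copies of $K_n$ by adding a perfect matching between them; $T_n$ is obtained from the join $K_n+E_n$ by adding one new vertex adjacent to exactly the $n$ vertices of $E_n$. *)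

From mathcomp Require Import all_boot.
Set Implicit Arguments. Unset Strict Implicit. Unset Printing Implicit Defensive.

Record graph := Graph {
  gn : nat;
  gadj : rel 'I_gn;
  gsym : symmetric gadj;
  girr : irreflexive gadj }.

Definition induced (H1 H2 : graph) : Prop :=
  exists f : 'I_(gn H1) -> 'I_(gn H2),
    injective f /\ forall x y, @gadj H1 x y = @gadj H2 (f x) (f y).

Definition Hfree (Hf : graph -> Prop) (G : graph) : Prop :=
  forall H, Hf H -> ~ induced H G.

Definition fam_le (Hf1 Hf2 : graph -> Prop) : Prop :=
  forall H2, Hf2 H2 -> exists H1, Hf1 H1 /\ induced H1 H2.

Definition nbhd (G : graph) (v : 'I_(gn G)) : {set 'I_(gn G)} :=
  [set u | @gadj G v u].
Definition nbrel (G : graph) (v : 'I_(gn G)) : rel 'I_(gn G) :=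
  fun x y => [&& @gadj G x y, x \in nbhd v & y \in nbhd v].

Definition ncomp_nbhd (G : graph) (v : 'I_(gn G)) : nat :=
  n_comp (nbrel v) (mem (nbhd v)).

Definition disc_vertices (G : graph) : {set 'I_(gn G)} :=
  [set v | 1 < ncomp_nbhd v].

Definition mkrel (m : nat) (f : nat -> nat -> bool) : rel 'I_m :=
  fun x y => (x != y) && (f x y || f y x).
Lemma mkrel_sym m f : symmetric (@mkrel m f).
Proof. by move=> x y; rewrite /mkrel eq_sym orbC. Qed.
Lemma mkrel_irr m f : irreflexive (@mkrel m f).
Proof. by move=> x; rewrite /mkrel eqxx. Qed.
Definition mkgraph (m : nat) (f : nat -> nat -> bool) : graph :=
  @Graph m (@mkrel m f) (@mkrel_sym m f) (@mkrel_irr m f).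

(* K_n^* : clique 0..n-1, pendant n+i attached to i *)
Definition Kstar (n : nat) : graph :=
  mkgraph (2 * n) (fun x y => ((x < n) && (y < n)) || ((x < n) && (y == x + n))).
(* n P_3 : block k = {3k, 3k+1, 3k+2}, middle 3k+1 adjacent to the other two *)
Definition nP3 (n : nat) : graph :=
  mkgraph (3 * n) (fun x y => (x %/ 3 == y %/ 3) && (x %% 3 == 1)).
(* K_{1,n}^* : centre 0, leaves 1..n, pendant n+i attached to leaf i *)
Definition K1nstar (n : nat) : graph :=
  mkgraph (2 * n + 1) (fun x y => ((x == 0) && (1 <= y <= n))
                                || ((1 <= x <= n) && (y == x + n))).
(* K_{2,n} : parts {0,1} and {2,...,n+1} *)
Definition K2n (n : nat) : graph :=
  mkgraph (n + 2) (fun x y => (x < 2) && (2 <= y)).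
(* CK_n : cliques {0..n-1}, {n..2n-1}, matching i -- n+i *)
Definition CK (n : nat) : graph :=
  mkgraph (2 * n) (fun x y => [|| (x < n) && (y < n), (n <= x) && (n <= y)
                               | (x < n) && (y == x + n)]).
(* T_n : K_n on 0..n-1 joined with E_n on n..2n-1, plus vertex 2n adjacent to E_n *)
Definition Tn (n : nat) : graph :=
  mkgraph (2 * n + 1) (fun x y => [|| (x < n) && (y < n),
                                     (x < n) && (n <= y < 2 * n)
                                   | (x == 2 * n) && (n <= y < 2 * n)]).

Definition six_family (n : nat) : graph -> Prop :=
  fun G => G = Kstar n \/ G = nP3 n \/ G = K1nstar n \/ G = K2n n \/ G = CK n \/ G = Tn n.

From mathcomp Require Import all_boot.
From mathcomp Require Import zify.
From Stdlib Require Import Classical.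
Set Implicit Arguments. Unset Strict Implicit. Unset Printing Implicit Defensive.

(* A graph of any of the six kinds with parameter N has at least N vertices whose
   neighbourhood is disconnected, which gives (i) => (ii).

   For (ii) => (i) let G avoid K_n^*, nP_3, K_{1,n}^*, K_{2,n} and CK_n (T_n contains
   K_{2,n}), and let D be the set of vertices with a disconnected neighbourhood. A
   vertex of D can escape any clique K in its neighbourhood: it has a neighbour that
   is neither in K nor adjacent to K. By Ramsey's theorem a large D contains a large
   clique or a large stable set. On a clique S, escaping S - v gives a private
   neighbour q(v) of each v, and Ramsey's theorem on the q(v) yields CK_n or K_n^*.
   Escaping a common neighbour of many stable vertices of D yields K_{2,n}, K_n^* or
   K_{1,n}^*, so such common neighbourhoods are bounded. On a stable set, give each v
   neighbours a(v) and b(v) in different components of N(v); iterated Ramsey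
   arguments either find K_{2,n}, K_n^* or a large common neighbourhood, or leave n
   vertices whose paths a(v) v b(v) are pairwise anticomplete: an induced nP_3. *)

Definition ramsey_bound (a b : nat) : nat := 2 ^ (a + b).

Definition star_bound (j k m : nat) : nat :=
  ramsey_bound (j + k) (ramsey_bound (j + k) m).

Section Ramsey.
Variable T : eqType.

Lemma ramsey (r : rel T) (a b : nat) (s : seq T) : ramsey_bound a b <= size s ->
  exists2 t, subseq t s & (size t = a /\ pairwise r t) \/
                          (size t = b /\ pairwise (fun x y => ~~ r x y) t).
Proof.
rewrite /ramsey_bound; elim: a b s => [|a IHa] b s.
  by exists [::]; [exact: sub0seq | left].
elim: b s => [|b IHb] s; first by exists [::]; [exact: sub0seq | right].
case: s => [|x s] hs; first by rewrite leqNgt expn_gt0 in hs.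
rewrite /= addSn addnS expnS mul2n -addnn in hs.
have drop_x t p : subseq t (filter p s) -> subseq t (x :: s).
  by move=> ts; apply: subseq_trans ts (subseq_trans (filter_subseq _ _) (subseq_cons s x)).
have keep_x t p : subseq t (filter p s) -> subseq (x :: t) (x :: s).
  by move=> ts; rewrite /= eqxx (subseq_trans ts) ?filter_subseq.
have all_x t (p : pred T) : subseq t (filter p s) -> all p t.
  by move=> ts; apply/allP => y /(mem_subseq ts); rewrite mem_filter => /andP[].
have [le_in|le_out] : 2 ^ (a + b.+1) <= size (filter (r x) s) \/
                      2 ^ (a.+1 + b) <= size (filter (predC (r x)) s).
  by rewrite addnS addSn; move: hs; rewrite -(count_predC (r x)) !size_filter; lia.
- have [t ts [[st pt]|[st pt]]] := IHa _ _ le_in; last by exists t; [exact: drop_x ts | right].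
  by exists (x :: t); [exact: keep_x ts | left; rewrite pairwise_cons /= st pt all_x].
- have [t ts [[st pt]|[st pt]]] := IHb _ le_out; first by exists t; [exact: drop_x ts | left].
  by exists (x :: t); [exact: keep_x ts | right; rewrite pairwise_cons /= st pt (all_x _ _ ts)].
Qed.

Lemma pairwise_both_in (r : rel T) (s : seq T) : uniq s ->
  pairwise r s -> pairwise (fun x y => r y x) s -> {in s &, forall x y, x != y -> r x y}.
Proof.
elim: s => [|z s IH] //= /andP[zs us] /andP[/allP rz ps] /andP[/allP rz' ps'] x y.
rewrite !inE => /predU1P[->|xs] /predU1P[->|ys]; rewrite ?eqxx //.
- by move=> _; apply: rz.
- by move=> _; apply: rz'.
- exact: IH.
Qed.

Lemma ramsey_sym (r : rel T) (a b : nat) (s : seq T) : symmetric r -> uniq s ->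
  ramsey_bound a b <= size s ->
  exists t, [/\ uniq t, {subset t <= s} &
    (size t = a /\ {in t &, forall x y, x != y -> r x y}) \/
    (size t = b /\ {in t &, forall x y, x != y -> ~~ r x y})].
Proof.
move=> sym_r us /(ramsey r)[t ts pt]; exists t; split.
- exact: subseq_uniq ts us.
- exact: mem_subseq ts.
have ut := subseq_uniq ts us.
by case: pt => [] [st pt]; [left|right]; split => //; apply: pairwise_both_in => //;
  apply: sub_pairwise pt => x y /=; rewrite sym_r.
Qed.

(* Ramsey's theorem applied to [r] and then to its converse: a clique in either
   order contains the star [c] x [t]. *)
Lemma ramsey_star (r : rel T) (j k m : nat) (s : seq T) : uniq s ->
  star_bound j k m <= size s ->
  (exists c t, [/\ uniq (c ++ t), {subset c ++ t <= s}, size c = j, size t = k &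
                   {in c & t, forall x y, r x y}]) \/
  (exists u, [/\ uniq u, {subset u <= s}, size u = m &
                 {in u &, forall x y, x != y -> ~~ r x y}]).
Proof.
move=> us /(ramsey r)[t ts [[st pt]|[st pt]]].
  left; exists (take j t), (drop j t); rewrite cat_take_drop size_drop st.
  split; [exact: subseq_uniq ts us | exact: mem_subseq ts | | by rewrite addKn |].
    by rewrite size_takel // st leq_addr.
  by apply/allrelP; move: pt; rewrite -{1}(cat_take_drop j t) pairwise_cat => /andP[].
have ut := subseq_uniq ts us.
have [t' t's [[st' pt']|[st' pt']]] := ramsey (fun x y => r y x) (eq_leq (esym st)).
  have ut' := subseq_uniq t's ut.
  left; exists (drop k t'), (take k t'); rewrite -/(rot k t') rot_uniq size_drop st'.
  split => //; first by move=> x; rewrite mem_rot => /(mem_subseq t's)/(mem_subseq ts).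
  - by rewrite addnK.
  - by rewrite size_takel // st' leq_addl.
  move: pt'; rewrite -{1}(cat_take_drop k t') pairwise_cat => /andP[/allrelP h _].
  by move=> x y xd yt; apply: h.
right; exists t'; split.
- exact: subseq_uniq t's ut.
- by move=> x /(mem_subseq t's)/(mem_subseq ts).
- exact: st'.
by apply: pairwise_both_in (subseq_uniq t's ut) (subseq_pairwise t's pt) pt'.
Qed.
End Ramsey.

Lemma adj_neq (G : graph) (x y : 'I_(gn G)) : gadj x y -> x != y.
Proof. by apply: contraTneq => ->; rewrite girr. Qed.

Lemma induced_trans (H1 H2 H3 : graph) : induced H1 H2 -> induced H2 H3 -> induced H1 H3.
Proof.
move=> [f [f_inj f_adj]] [g [g_inj g_adj]]; exists (g \o f); split.
  exact: inj_comp.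
by move=> x y /=; rewrite f_adj g_adj.
Qed.

Section Neighbourhood.
Variable G : graph.
Local Notation V := ('I_(gn G)).
Local Notation adj := (@gadj G).
Local Notation D := (disc_vertices G).

Lemma nbrel_connect_sym (v : V) : connect_sym (nbrel v).
Proof. by apply: sym_connect_sym => x y; rewrite /nbrel gsym (andbC (x \in _)). Qed.

Lemma connect_nbrel_adj (v x y : V) : adj v x -> connect (nbrel v) x y -> adj v y.
Proof.
move=> vx /connectP[p]; elim: p x vx => [|z p IH] x vx /=; first by move=> _ ->.
by case/andP=> /and3P[_ _]; rewrite inE => /IH.
Qed.

Lemma disc_vertexP (v : V) :
  reflect (exists a b, [/\ adj v a, adj v b & ~~ connect (nbrel v) a b])
          (v \in D).
Proof.
have sym_v := nbrel_connect_sym v.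
rewrite inE /ncomp_nbhd /n_comp_mem; apply: (iffP card_gt1P).
  move=> [x [y []]]; rewrite !inE => /andP[/eqP rx vx] /andP[/eqP ry vy] xy.
  by exists x, y; split; rewrite // -root_connect // rx ry.
move=> [a [b [va vb ab]]]; exists (root (nbrel v) a), (root (nbrel v) b).
rewrite !inE !roots_root // root_connect //; split => //.
- exact: connect_nbrel_adj va (connect_root _ a).
- exact: connect_nbrel_adj vb (connect_root _ b).
Qed.

Lemma disc_isolated (v a b : V) : adj v a -> adj v b -> a != b ->
  (forall y, adj a y -> ~~ adj v y) -> v \in D.
Proof.
move=> va vb ab a_iso; apply/disc_vertexP; exists a, b; split => //.
apply: contra ab => /connectP[[|z p] /=]; first by move=> _ ->.
by case/andP=> /and3P[/a_iso/negbTE vz _]; rewrite inE vz.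
Qed.

(* The clique [K] lies in one component of G[N(v)]; a neighbour of [v] in another
   component is what a disconnected neighbourhood provides. *)
Lemma disc_escape (v : V) (K : seq V) : v \in D ->
  {in K, forall k, adj v k} -> {in K &, forall k l, k != l -> adj k l} ->
  exists2 w, adj v w & {in K, forall k, (w != k) && ~~ adj w k}.
Proof.
move=> /disc_vertexP[a [b [va vb ab]]] vK cK.
case: K vK cK => [|u K] vK cK; first by exists a.
have vu : adj v u by apply: vK; rewrite inE eqxx.
have u_k k : k \in u :: K -> connect (nbrel v) u k.
  move=> kK; have [<-|uk] := eqVneq u k; first exact: connect0.
  by apply: connect1; rewrite /nbrel cK ?inE ?eqxx ?vu ?vK.
have [w vw uw] : exists2 w, adj v w & ~~ connect (nbrel v) u w.
  have [ua|] := boolP (connect (nbrel v) u a); last by exists a.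
  exists b => //; apply: contra ab => ub.
  by apply: connect_trans ub; rewrite nbrel_connect_sym.
exists w => // k kK; apply/andP; split.
  by apply: contra uw => /eqP->; apply: u_k.
apply: contra uw => wk; apply: connect_trans (u_k k kK) _.
by apply: connect1; rewrite /nbrel gsym wk !inE vw vK.
Qed.

Lemma disc_escape_fun (A : {pred V}) (K : V -> seq V) : {subset A <= D} ->
  {in A, forall v, {in K v, forall k, adj v k}} ->
  {in A, forall v, {in K v &, forall k l, k != l -> adj k l}} ->
  exists f : V -> V, {in A, forall v,
    adj v (f v) /\ {in K v, forall k, (f v != k) && ~~ adj (f v) k}}.
Proof.
move=> AD vK cK.
have /fin_all_exists[f hf] : forall v : V, exists w : V, v \in A ->
    adj v w /\ {in K v, forall k, (w != k) && ~~ adj w k}.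
  move=> v; have [vA|] := boolP (v \in A); last by exists v.
  by have [w vw wK] := disc_escape (AD v vA) (vK v vA) (cK v vA); exists w.
by exists f => v /hf.
Qed.

Lemma disc_two_nbrs (A : {pred V}) : {subset A <= D} -> exists a b : V -> V,
  {in A, forall v, [/\ adj v (a v), adj v (b v), a v != b v & ~~ adj (a v) (b v)]}.
Proof.
move=> AD.
have [a ha] : exists a : V -> V, {in A, forall v, adj v (a v) /\
    {in [::], forall k, (a v != k) && ~~ adj (a v) k}} by apply: disc_escape_fun.
have [b hb] : exists b : V -> V, {in A, forall v, adj v (b v) /\
    {in [:: a v], forall k, (b v != k) && ~~ adj (b v) k}}.
  apply: (disc_escape_fun AD) => [v vA k|v _ k l]; rewrite !inE.
    by move=> /eqP->; case/ha: vA.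
  by move=> /eqP-> /eqP->; rewrite eqxx.
exists a, b => v vA; have [va _] := ha v vA; have [vb /(_ (a v))] := hb v vA.
by rewrite inE eqxx eq_sym gsym => /(_ isT)/andP[].
Qed.

End Neighbourhood.

Section Embeddings.
Variable G : graph.
Local Notation V := ('I_(gn G)).
Local Notation adj := (@gadj G).

Lemma induced_mkgraph (m : nat) (f : nat -> nat -> bool) (g : nat -> V) :
  {in gtn m &, injective g} ->
  (forall i j, i < m -> j < m -> i != j -> adj (g i) (g j) = f i j || f j i) ->
  induced (mkgraph m f) G.
Proof.
move=> g_inj g_adj; exists (fun i : 'I_m => g i); split.
  by move=> i j /g_inj eq_ij; apply/val_inj/eq_ij; rewrite inE /=.
move=> i j /=; rewrite /mkrel; have [->|ij] := eqVneq i j; first by rewrite girr.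
by rewrite g_adj.
Qed.

Lemma induced_mkgraph_seq (m : nat) (f : nat -> nat -> bool) (x0 : V) (s : seq V) :
  uniq s -> size s = m ->
  (forall i j, i < m -> j < m -> i != j ->
     adj (nth x0 s i) (nth x0 s j) = f i j || f j i) ->
  induced (mkgraph m f) G.
Proof. by move=> /(uniqP x0) s_inj <-; apply: induced_mkgraph. Qed.

Variable n : nat.
Hypothesis n_gt0 : 0 < n.

Lemma nth_layers (x0 : V) (c e : V -> V) (y : seq V) (i : nat) : i < 2 * size y ->
  nth x0 (map c y ++ map e y) i =
  if i < size y then c (nth x0 y i) else e (nth x0 y (i - size y)).
Proof.
by move=> i2y; rewrite nth_cat size_map; case: ifP => iy; rewrite (nth_map x0) //; lia.
Qed.

Lemma matching_injl (c e : V -> V) (y : seq V) :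
  {in y &, forall v w, adj (c v) (e w) = (v == w)} -> {in y &, injective c}.
Proof. by move=> cem v w vy wy cvw; apply/eqP; rewrite -cem // cvw cem ?eqxx. Qed.

Lemma matching_injr (c e : V -> V) (y : seq V) :
  {in y &, forall v w, adj (c v) (e w) = (v == w)} -> {in y &, injective e}.
Proof. by move=> cem v w vy wy evw; apply/eqP; rewrite -cem // -evw cem ?eqxx. Qed.

Lemma uniq_layers (c e : V -> V) (y : seq V) : uniq y ->
  {in y &, forall v w, c v != e w} -> {in y &, forall v w, adj (c v) (e w) = (v == w)} ->
  uniq (map c y ++ map e y).
Proof.
move=> uy ce cem; rewrite cat_uniq !map_inj_in_uniq ?uy ?andbT /=.
- apply/hasPn => _ /mapP[w wy ->].
  by apply/mapP => -[v vy /eqP]; rewrite eq_sym (negbTE (ce v w vy wy)).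
- exact: matching_injr cem.
- exact: matching_injl cem.
Qed.

(* K_n^* and CK_n: two layers of size n, each a clique or stable, joined by a
   perfect matching. *)
Lemma matched_layers_induced (f : nat -> nat -> bool) (b1 b2 : bool) (c e : V -> V)
    (y : seq V) : uniq y -> size y = n ->
  {in y &, forall v w, c v != e w} ->
  {in y &, forall v w, v != w -> adj (c v) (c w) = b1} ->
  {in y &, forall v w, v != w -> adj (e v) (e w) = b2} ->
  {in y &, forall v w, adj (c v) (e w) = (v == w)} ->
  (forall i j, i < n -> j < n -> i != j -> f i j || f j i = b1) ->
  (forall i j, n <= i < 2 * n -> n <= j < 2 * n -> i != j -> f i j || f j i = b2) ->
  (forall i j, i < n -> n <= j < 2 * n -> f i j || f j i = (i + n == j)) ->
  induced (mkgraph (2 * n) f) G.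
Proof.
move=> uy sy ce cc ee cem f1 f2 f12.
have /hasP[x0 _ _] : has predT y by rewrite has_predT sy.
have us := uniq_layers uy ce cem.
have y_eq i j : i < n -> j < n -> (nth x0 y i == nth x0 y j) = (i == j).
  by move=> ? ?; rewrite nth_uniq ?sy.
have y_mem i : i < n -> nth x0 y i \in y by move=> ?; rewrite mem_nth ?sy.
apply: (induced_mkgraph_seq (x0 := x0) us); first by rewrite size_cat !size_map sy; lia.
move=> i j i2n j2n ij; rewrite !nth_layers sy //.
case: (ltnP i n) => ilt; case: (ltnP j n) => jlt.
- by rewrite cc ?y_mem ?y_eq // f1.
- rewrite cem ?y_mem ?f12 //; try lia.
  by rewrite y_eq; lia.
- rewrite gsym cem ?y_mem 1?orbC ?f12 //; try lia.
  by rewrite y_eq; lia.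
- by rewrite ee ?y_mem ?y_eq ?f2 //; lia.
Qed.

Lemma Kstar_induced (c e : V -> V) (y : seq V) : uniq y -> size y = n ->
  {in y &, forall v w, c v != e w} ->
  {in y &, forall v w, v != w -> adj (c v) (c w)} ->
  {in y &, forall v w, v != w -> ~~ adj (e v) (e w)} ->
  {in y &, forall v w, adj (c v) (e w) = (v == w)} ->
  induced (Kstar n) G.
Proof.
move=> uy sy ce cc ee cem.
have ee' : {in y &, forall v w, v != w -> adj (e v) (e w) = false}.
  by move=> v w vy wy /(ee v w vy wy)/negbTE.
by apply: (matched_layers_induced uy sy ce cc ee' cem) => i j *; lia.
Qed.

Lemma CK_induced (c e : V -> V) (y : seq V) : uniq y -> size y = n ->
  {in y &, forall v w, c v != e w} ->
  {in y &, forall v w, v != w -> adj (c v) (c w)} ->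
  {in y &, forall v w, v != w -> adj (e v) (e w)} ->
  {in y &, forall v w, adj (c v) (e w) = (v == w)} ->
  induced (CK n) G.
Proof.
move=> uy sy ce cc ee cem.
by apply: (matched_layers_induced uy sy ce cc ee cem) => i j *; lia.
Qed.

Lemma K2n_induced (x0 x1 : V) (t : seq V) : x0 != x1 -> ~~ adj x0 x1 ->
  uniq t -> size t = n -> {in t, forall w, adj x0 w && adj x1 w} ->
  {in t &, forall v w, v != w -> ~~ adj v w} ->
  induced (K2n n) G.
Proof.
move=> x01 nx01 ut st xt tt.
have xt0 w : w \in t -> adj x0 w by move/xt/andP=> [].
have xt1 w : w \in t -> adj x1 w by move/xt/andP=> [].
have notin_t (x : V) : {in t, forall w, adj x w} -> x \notin t.
  by move=> xw; apply/negP => /xw; rewrite girr.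
have us : uniq [:: x0, x1 & t] by rewrite /= inE negb_or x01 !notin_t.
have t_mem i : i < n -> nth x0 t i \in t by move=> ?; rewrite mem_nth ?st.
apply: (induced_mkgraph_seq (x0 := x0) us); first by rewrite /= st addn2.
move=> [|[|i]] [|[|j]] //= ilt jlt ij.
- by rewrite (negbTE nx01).
- by rewrite xt0 ?t_mem //; lia.
- by rewrite gsym (negbTE nx01).
- by rewrite xt1 ?t_mem //; lia.
- by rewrite gsym xt0 ?t_mem //; lia.
- by rewrite gsym xt1 ?t_mem //; lia.
- by rewrite (negbTE (tt _ _ _ _ _)) ?t_mem ?nth_uniq ?st //; lia.
Qed.

Lemma K1nstar_induced (x : V) (p : V -> V) (y : seq V) : uniq y -> size y = n ->
  {in y, forall v, adj x v} -> {in y, forall v, (x != p v) && ~~ adj x (p v)} ->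
  {in y &, forall v w, v != p w} ->
  {in y &, forall v w, v != w -> ~~ adj v w} ->
  {in y &, forall v w, v != w -> ~~ adj (p v) (p w)} ->
  {in y &, forall v w, adj v (p w) = (v == w)} ->
  induced (K1nstar n) G.
Proof.
move=> uy sy xy xp yp yy pp ypm.
have /hasP[x0 _ _] : has predT y by rewrite has_predT sy.
have y_mem i : i < n -> nth x0 y i \in y by move=> ?; rewrite mem_nth ?sy.
have y_eq i j : i < n -> j < n -> (nth x0 y i == nth x0 y j) = (i == j).
  by move=> ? ?; rewrite nth_uniq ?sy.
have xp0 v : v \in y -> adj x (p v) = false by move/xp/andP=> [_ /negbTE].
have us : uniq (x :: (map id y ++ map p y)).
  rewrite /= uniq_layers // mem_cat map_id negb_or andbT; apply/andP; split.
    by apply/negP => /xy; rewrite girr.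
  by apply/mapP => -[v /xp/andP[/eqP]].
apply: (induced_mkgraph_seq (x0 := x0) us); first by rewrite /= size_cat !size_map sy; lia.
move=> [|i] [|j] //= ilt jlt ij; rewrite ?nth_layers ?sy; try lia.
- by case: ifP => jn; [rewrite xy ?y_mem | rewrite xp0 ?y_mem //]; lia.
- by case: ifP => jn; rewrite gsym; [rewrite xy ?y_mem | rewrite xp0 ?y_mem //]; lia.
case: ifP => ilt'; case: ifP => jlt' /=.
- by rewrite (negbTE (yy _ _ _ _ _)) ?y_mem ?y_eq //; lia.
- by rewrite ypm ?y_mem ?y_eq //; lia.
- by rewrite gsym ypm ?y_mem ?y_eq //; lia.
- by rewrite (negbTE (pp _ _ _ _ _)) ?y_mem ?y_eq //; lia.
Qed.

Lemma nP3_induced (a b : V -> V) (y : seq V) : uniq y -> size y = n ->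
  {in y, forall v, [/\ adj v (a v), adj v (b v), a v != b v & ~~ adj (a v) (b v)]} ->
  {in y &, forall v w, v != w ->
     {in [:: a v; v; b v] & [:: a w; w; b w], forall x z, ~~ adj x z}} ->
  induced (nP3 n) G.
Proof.
move=> uy sy p3 anti.
have /hasP[x0 _ _] : has predT y by rewrite has_predT sy.
pose blk v := [:: a v; v; b v].
pose g i := nth x0 (blk (nth x0 y (i %/ 3))) (i %% 3).
have y_mem i : i < 3 * n -> nth x0 y (i %/ 3) \in y by move=> ?; rewrite mem_nth ?sy //; lia.
have g_mem i : g i \in blk (nth x0 y (i %/ 3)) by rewrite mem_nth // ltn_mod.
have blk_uniq v : v \in y -> uniq (blk v).
  by move=> /p3[va vb ab _]; rewrite /= !inE !negb_or ab !andbT eq_sym !adj_neq.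
have blk_nbr v x : v \in y -> x \in blk v -> exists2 z, z \in blk v & adj x z.
  move=> /p3[va vb _ _]; rewrite !inE => /or3P[] /eqP->.
  - by exists v; rewrite ?inE ?eqxx ?orbT // gsym.
  - by exists (a v); rewrite ?inE ?eqxx.
  - by exists v; rewrite ?inE ?eqxx ?orbT // gsym.
have anti_g i j : i < 3 * n -> j < 3 * n -> i %/ 3 != j %/ 3 -> ~~ adj (g i) (g j).
  by move=> i3 j3 ij; apply: anti (g_mem i) (g_mem j); rewrite ?y_mem ?nth_uniq ?sy //; lia.
apply: (induced_mkgraph (g := g)).
  move=> i j; rewrite !inE => i3 j3 gij.
  have ed : i %/ 3 = j %/ 3.
    apply/eqP; apply: contraT => ij.
    have [z zb gz] := blk_nbr _ _ (y_mem i i3) (g_mem i).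
    have := anti _ _ (y_mem i i3) (y_mem j j3).
    rewrite nth_uniq ?sy; try lia.
    by move=> /(_ ij z (g j) zb (g_mem j)); rewrite -gij gsym gz.
  have em : i %% 3 = j %% 3.
    move: gij; rewrite /g ed => /eqP; rewrite nth_uniq ?ltn_mod // => [/eqP //|].
    exact: blk_uniq (y_mem j j3).
  by rewrite (divn_eq i 3) (divn_eq j 3) ed em.
move=> i j i3 j3 ij /=.
have [ed|nd] := eqVneq (i %/ 3) (j %/ 3); last first.
  by rewrite (negbTE (anti_g i j i3 j3 nd)).
have rq : i %% 3 != j %% 3.
  by apply: contra ij => /eqP em; rewrite (divn_eq i 3) (divn_eq j 3) ed em.
rewrite /g ed; have [va vb _ nab] := p3 _ (y_mem j j3).
move: (ltn_mod i 3) (ltn_mod j 3) rq.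
case: (i %% 3) => [|[|[|r]]]; case: (j %% 3) => [|[|[|q]]] //= _ _ _;
  by rewrite ?va ?vb ?(negbTE nab) // gsym ?va ?vb ?(negbTE nab).
Qed.

End Embeddings.

Definition common_nbr_bound (n : nat) : nat := star_bound 1 n (ramsey_bound n n).

Definition stable_disc_bound (n : nat) : nat :=
  let M := common_nbr_bound n in
  star_bound 1 M (star_bound 1 M (ramsey_bound n (ramsey_bound n (star_bound 2 n n)))).

Definition disc_bound (n : nat) : nat := ramsey_bound (ramsey_bound n n) (stable_disc_bound n).

Section UpperBound.
Variables (G : graph) (n : nat).
Local Notation V := ('I_(gn G)).
Local Notation adj := (@gadj G).
Local Notation D := (disc_vertices G).
Hypothesis n_gt0 : 0 < n.
Hypothesis Kstar_free : ~ induced (Kstar n) G.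
Hypothesis nP3_free : ~ induced (nP3 n) G.
Hypothesis K1nstar_free : ~ induced (K1nstar n) G.
Hypothesis K2n_free : ~ induced (K2n n) G.
Hypothesis CK_free : ~ induced (CK n) G.

Lemma private_nbrs_stable (f : V -> V) (u : seq V) (m : nat) : uniq u ->
  {in u &, forall v w, v != w -> ~~ adj v w} ->
  {in u &, forall v w, adj (f v) w = (v == w)} -> ramsey_bound n m <= size u ->
  exists u', [/\ uniq u', {subset u' <= u}, size u' = m &
                 {in u' &, forall v w, v != w -> ~~ adj (f v) (f w)}].
Proof.
move=> uu su fu big.
have [y [uy yu [[sy cy]|[sy sty]]]] :=
  ramsey_sym (fun v w => gsym (f v) (f w)) uu big; last by exists y.
have f_out v w : v \in u -> w \in u -> f v != w.
  move=> vu wu; apply/eqP => fvw; have := fu v v vu vu; rewrite eqxx fvw => wv.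
  have vw : v != w by apply: contraTneq wv => ->; rewrite girr.
  by have := su v w vu wu vw; rewrite gsym wv.
case: Kstar_free; apply: (Kstar_induced n_gt0 (c := f) (e := id) uy sy).
- by move=> v w /yu vu /yu wu; apply: f_out.
- exact: cy.
- by move=> v w /yu vu /yu wu; apply: su.
- by move=> v w /yu vu /yu wu; apply: fu.
Qed.

Lemma common_nbrs_small (x : V) (s : seq V) : uniq s -> {subset s <= D} ->
  {in s, forall v, adj x v} -> {in s &, forall v w, v != w -> ~~ adj v w} ->
  size s < common_nbr_bound n.
Proof.
move=> us sD xs ss; rewrite ltnNge; apply/negP => big.
have [p hp] : exists p : V -> V, {in s, forall v,
    adj v (p v) /\ {in [:: x], forall k, (p v != k) && ~~ adj (p v) k}}.
  apply: (disc_escape_fun sD) => [v vs k|v _ k l]; rewrite !inE.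
    by move=> /eqP->; rewrite gsym xs.
  by move=> /eqP-> /eqP->; rewrite eqxx.
have vp v : v \in s -> adj v (p v) by case/hp.
have px v : v \in s -> (x != p v) && ~~ adj x (p v).
  by case/hp=> _ /(_ x); rewrite inE eqxx gsym eq_sym => ->.
have p_out v w : v \in s -> w \in s -> p v != w.
  move=> vs ws; apply/eqP => pvw; have := vp v vs; rewrite pvw => vw.
  by have := ss v w vs ws (adj_neq vw); rewrite vw.
have [[c [t [uct sub sc st star]]]|[u [uu us' su pu]]] :=
  ramsey_star (fun v w => adj (p v) w) us big.
  case: c sc uct sub star => [|v [|]] // _ uct sub star.
  have [vs ts] : v \in s /\ {subset t <= s}.
    by split=> [|w wt]; apply: sub; rewrite inE ?eqxx ?wt ?orbT.
  move: uct; rewrite cat_uniq => /and3P[_ _ ut].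
  have [/andP[xpv nxpv]] := px v vs.
  case: K2n_free; apply: (K2n_induced n_gt0 xpv nxpv ut st).
    by move=> w wt; rewrite xs ?ts // star ?inE.
  by move=> v' w /ts v's /ts ws; apply: ss.
have pum : {in u &, forall v w, adj (p v) w = (v == w)}.
  move=> v w vu wu; have [<-|vw] := eqVneq v w; first by rewrite gsym vp ?us'.
  exact/negbTE/pu.
have [y [uy yu sy py]] := private_nbrs_stable uu (sub_in2 us' ss) pum (eq_leq (esym su)).
case: K1nstar_free; apply: (K1nstar_induced n_gt0 (x := x) (p := p) uy sy).
- by move=> v /yu/us'; apply: xs.
- by move=> v /yu/us'; apply: px.
- by move=> v w /yu/us' vs /yu/us' ws; rewrite eq_sym p_out.
- by move=> v w /yu/us' vs /yu/us' ws; apply: ss.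
- exact: py.
- by move=> v w /yu vu /yu wu; rewrite gsym pum // eq_sym.
Qed.

Lemma private_nbrs (f : V -> V) (s : seq V) (m : nat) : uniq s -> {subset s <= D} ->
  {in s &, forall v w, v != w -> ~~ adj v w} -> {in s, forall v, adj v (f v)} ->
  star_bound 1 (common_nbr_bound n) m <= size s ->
  exists u, [/\ uniq u, {subset u <= s}, size u = m &
                {in u &, forall v w, adj (f v) w = (v == w)}].
Proof.
move=> us sD ss sf big.
have [[c [t [uct sub sc st star]]]|[u [uu us' su pu]]] :=
  ramsey_star (fun v w => adj (f v) w) us big.
  case: c sc uct sub star => [|v [|]] // _; rewrite cat_uniq => /and3P[_ _ ut] sub star.
  have ts : {subset t <= s} by move=> w wt; apply: sub; rewrite inE wt orbT.
  have ft : {in t, forall w, adj (f v) w} by move=> w wt; rewrite star ?inE.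
  have tD : {subset t <= D} by move=> w /ts/sD.
  by have := common_nbrs_small ut tD ft (sub_in2 ts ss); rewrite st ltnn.
exists u; split=> // v w vu wu; have [<-|vw] := eqVneq v w.
  by rewrite gsym sf ?us'.
exact/negbTE/pu.
Qed.

Lemma disc_clique_small (S : seq V) : uniq S -> {subset S <= D} ->
  {in S &, forall v w, v != w -> adj v w} -> size S < ramsey_bound n n.
Proof.
move=> uS SD cS; rewrite ltnNge; apply/negP => big.
have [q hq] : exists q : V -> V, {in S, forall v, adj v (q v) /\
    {in [seq k <- S | k != v], forall k, (q v != k) && ~~ adj (q v) k}}.
  apply: (disc_escape_fun SD) => v vS k.
    by rewrite mem_filter => /andP[kv kS]; apply: cS; rewrite // eq_sym.
  by move=> l; rewrite !mem_filter => /andP[_ kS] /andP[_ lS]; apply: cS.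
have vq v : v \in S -> adj v (q v) by case/hq.
have qS v w : v \in S -> w \in S -> v != w -> (q v != w) && ~~ adj (q v) w.
  by move=> vS wS vw; case/hq: vS => _; apply; rewrite mem_filter eq_sym vw.
have q_out v w : v \in S -> w \in S -> v != q w.
  move=> vS wS; have [<-|vw] := eqVneq w v; first by rewrite adj_neq ?vq.
  by have /andP[] := qS w v wS vS vw; rewrite eq_sym.
have qm : {in S &, forall v w, adj v (q w) = (v == w)}.
  move=> v w vS wS; have [<-|vw] := eqVneq v w; first by rewrite vq.
  have wv : w != v by rewrite eq_sym.
  by case/andP: (qS w v wS vS wv) => _ /negbTE; rewrite gsym.
have [y [uy yS [[sy cy]|[sy sty]]]] := ramsey_sym (fun v w => gsym (q v) (q w)) uS big.
  case: CK_free; apply: (CK_induced n_gt0 (c := id) (e := q) uy sy).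
  - by move=> v w /yS vS /yS wS; apply: q_out.
  - by move=> v w /yS vS /yS wS; apply: cS.
  - exact: cy.
  - by move=> v w /yS vS /yS wS; apply: qm.
case: Kstar_free; apply: (Kstar_induced n_gt0 (c := id) (e := q) uy sy).
- by move=> v w /yS vS /yS wS; apply: q_out.
- by move=> v w /yS vS /yS wS; apply: cS.
- exact: sty.
- by move=> v w /yS vS /yS wS; apply: qm.
Qed.

Lemma private_paths_small (a b : V -> V) (u : seq V) : uniq u ->
  {in u &, forall v w, v != w -> ~~ adj v w} ->
  {in u, forall v, [/\ adj v (a v), adj v (b v), a v != b v & ~~ adj (a v) (b v)]} ->
  {in u &, forall v w, adj (a v) w = (v == w)} ->
  {in u &, forall v w, adj (b v) w = (v == w)} ->
  {in u &, forall v w, v != w -> ~~ adj (a v) (a w)} ->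
  {in u &, forall v w, v != w -> ~~ adj (b v) (b w)} ->
  size u < star_bound 2 n n.
Proof.
move=> uu su p3 am bm ast bst; rewrite ltnNge; apply/negP => big.
have [[c [t [uct sub sc st star]]]|[y [uy yu sy py]]] :=
  ramsey_star (fun v w => adj (a v) (b w)) uu big.
  case: c sc uct sub star => [|v1 [|v2 []]] // _.
  rewrite /= inE negb_or => /and3P[/andP[v12 _] _ ut] sub star.
  have [v1u v2u] : v1 \in u /\ v2 \in u by split; apply: sub; rewrite !inE eqxx ?orbT.
  have tu : {subset t <= u} by move=> w wt; apply: sub; rewrite !inE wt !orbT.
  have b_inj := matching_injl (e := id) bm.
  case: K2n_free; apply: (K2n_induced n_gt0 (x0 := a v1) (x1 := a v2) (t := map b t)).
  - by apply: contra v12 => /eqP/(matching_injl (e := id) am)->.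
  - exact: ast v12.
  - by rewrite map_inj_in_uniq // => v w /tu vu /tu wu; apply: b_inj.
  - by rewrite size_map.
  - by move=> _ /mapP[w wt ->]; rewrite !star ?inE ?eqxx ?orbT.
  move=> _ _ /mapP[w wt ->] /mapP[w' wt' ->] bw; apply: bst; rewrite ?tu //.
  by apply: contraNneq bw => ->.
case: nP3_free; apply: (nP3_induced n_gt0 uy sy (sub_in1 yu p3)).
move=> v w vy wy vw x z; have wv : w != v by rewrite eq_sym.
have [vu wu] : v \in u /\ w \in u by split; apply: yu.
have ? := su v w vu wu vw; have ? := py v w vy wy vw; have ? := py w v wy vy wv.
have ? := ast v w vu wu vw; have ? := bst v w vu wu vw.
have ? : ~~ adj (a v) w by rewrite am // (negbTE vw).
have ? : ~~ adj (a w) v by rewrite am // (negbTE wv).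
have ? : ~~ adj (b v) w by rewrite bm // (negbTE vw).
have ? : ~~ adj (b w) v by rewrite bm // (negbTE wv).
by rewrite !inE => /or3P[]/eqP-> /or3P[]/eqP->; rewrite // gsym.
Qed.

Lemma disc_stable_small (I : seq V) : uniq I -> {subset I <= D} ->
  {in I &, forall v w, v != w -> ~~ adj v w} -> size I < stable_disc_bound n.
Proof.
move=> uI ID sI; rewrite ltnNge; apply/negP => big.
have [a [b p3]] := disc_two_nbrs ID.
have va v : v \in I -> adj v (a v) by case/p3.
have vb v : v \in I -> adj v (b v) by case/p3.
have [u1 [uu1 u1I su1 am]] := private_nbrs uI ID sI va big.
have u1D : {subset u1 <= D} by move=> v /u1I/ID.
have [u2 [uu2 u21 su2 bm]] :=
  private_nbrs uu1 u1D (sub_in2 u1I sI) (sub_in1 u1I vb) (eq_leq (esym su1)).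
have u2I : {subset u2 <= I} by move=> v /u21/u1I.
have [u3 [uu3 u32 su3 ast]] :=
  private_nbrs_stable uu2 (sub_in2 u2I sI) (sub_in2 u21 am) (eq_leq (esym su2)).
have u3I : {subset u3 <= I} by move=> v /u32/u2I.
have [u4 [uu4 u43 su4 bst]] :=
  private_nbrs_stable uu3 (sub_in2 u3I sI) (sub_in2 u32 bm) (eq_leq (esym su3)).
have u4I : {subset u4 <= I} by move=> v /u43/u3I.
have u41 : {subset u4 <= u1} by move=> v /u43/u32/u21.
have u42 : {subset u4 <= u2} by move=> v /u43/u32.
have := private_paths_small uu4 (sub_in2 u4I sI) (sub_in1 u4I p3) (sub_in2 u41 am)
  (sub_in2 u42 bm) (sub_in2 u43 ast) bst.
by rewrite su4 ltnn.
Qed.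

Lemma disc_small : #|D| < disc_bound n.
Proof.
rewrite ltnNge cardE; apply/negP => big.
have [y [uy yD' y_cl_st]] := ramsey_sym (@gsym G) (enum_uniq (mem D)) big.
have yD : {subset y <= D} by move=> v /yD'; rewrite mem_enum.
case: y_cl_st => [[sy cy]|[sy sty]].
  by have := disc_clique_small uy yD cy; rewrite sy ltnn.
by have := disc_stable_small uy yD sty; rewrite sy ltnn.
Qed.

End UpperBound.

Lemma disc_mkgraph_ge (m : nat) (f : nat -> nat -> bool) (N : nat) (v a b : nat -> nat) :
  let nadj x y := (x != y) && (f x y || f y x) in
  (forall i, i < N -> v i < m) -> (forall i, i < N -> a i < m) ->
  (forall i, i < N -> b i < m) -> (forall i j, i < N -> j < N -> v i = v j -> i = j) ->
  (forall i, i < N -> a i != b i) -> (forall i, i < N -> nadj (v i) (a i)) ->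
  (forall i, i < N -> nadj (v i) (b i)) ->
  (forall i y, i < N -> y < m -> nadj (a i) y -> ~~ nadj (v i) y) ->
  N <= #|disc_vertices (mkgraph m f)|.
Proof.
move=> nadj vm am bm v_inj ab va vb a_iso.
pose g (i : 'I_N) : 'I_m := Ordinal (vm i (ltn_ord i)).
have g_inj : injective g by move=> i j [/v_inj eq_ij]; apply/val_inj/eq_ij.
rewrite -{1}(card_ord N) -(card_imset _ g_inj); apply/subset_leq_card/subsetP.
move=> _ /imsetP[i _ ->]; have iN := ltn_ord i.
apply: (@disc_isolated (mkgraph m f) (g i) (Ordinal (am i iN)) (Ordinal (bm i iN))).
- exact: va.
- exact: vb.
- exact: ab.
by move=> y; rewrite /= /mkrel -!val_eqE; apply: a_iso iN (ltn_ord y).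
Qed.

(* [v i] are the N counted vertices, [a i] a neighbour of [v i] isolated in its
   neighbourhood, and [b i] another neighbour. *)
Lemma six_family_disc_ge (N : nat) (F : graph) : 1 < N -> six_family N F ->
  N <= #|disc_vertices F|.
Proof.
move=> N_gt1 [->|[->|[->|[->|[->|->]]]]].
- by apply: (disc_mkgraph_ge (v := id) (a := addn^~ N) (b := fun i => (i == 0 : nat)))
    => /= *; lia.
- by apply: (disc_mkgraph_ge (v := fun i => 3 * i + 1) (a := muln 3)
    (b := fun i => 3 * i + 2)) => /= *; lia.
- by apply: (disc_mkgraph_ge (v := succn) (a := fun i => i.+1 + N) (b := fun=> 0))
    => /= *; lia.
- by apply: (disc_mkgraph_ge (v := addn^~ 2) (a := fun=> 0) (b := fun=> 1)) => /= *; lia.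
- by apply: (disc_mkgraph_ge (v := id) (a := addn^~ N) (b := fun i => (i == 0 : nat)))
    => /= *; lia.
- by apply: (disc_mkgraph_ge (v := addn N) (a := fun=> 2 * N) (b := fun=> 0)) => /= *; lia.
Qed.

Unset Implicit Arguments.

Theorem corollary1p10 (Hf : graph -> Prop) :
  (exists c : nat, forall G : graph, Hfree Hf G -> #|disc_vertices G| < c)
  <-> (exists n : nat, 0 < n /\ fam_le Hf (six_family n)).
Proof.
split=> [[c small]|[n [n_gt0 le_Hf]]].
  exists c.+2; split=> // F famF; apply: NNPP => no_sub.
  have F_free : Hfree Hf F by move=> H HH HF; apply: no_sub; exists H.
  have := six_family_disc_ge (isT : 1 < c.+2) famF.
  by rewrite leqNgt (ltn_trans (small F F_free)).
exists (disc_bound n) => G G_free.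
have free F : six_family n F -> ~ induced F G.
  move=> famF FG; have [H [HH HF]] := le_Hf F famF.
  exact: G_free H HH (induced_trans HF FG).
apply: (disc_small n_gt0); apply: free; rewrite /six_family; tauto.
Qed.
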